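(* Let $(\Sigma,E)$ be an algebraic theory and $(\Sigma^{\mathrm{s}},E^{\mathrm{s}})$ the associated theory. For all $\Sigma$-terms $t(v_1,\dots,v_n),s(v_1,\dots,v_n)$ over $\mathrm{Var}$: if $E\vdash t(v_1,\dots,v_n)=s(v_1,\dots,v_n)$, then $E^{\mathrm{s}}\vdash t(\mathsf{a}v_1,\dots,\mathsf{a}v_n)=s(\mathsf{a}v_1,\dots,\mathsf{a}v_n)$.
   Context: $\mathrm{Var}=\{v_1,v_2,\dots\}$ is a fixed set of variables; $E\vdash s=t$ means the equation is derivable from $E$ in equational logic (axioms, reflexivity, symmetry, transitivity, congruence, substitution). Given $(\Sigma,E)$, the theory $(\Sigma^{\mathrm{s}},E^{\mathrm{s}})$ has signature $\Sigma^{\mathrm{s}}=\Sigma\uplus\{\mathsf{a}:1\}$ and equations $E^{\mathrm{s}}$ consisting of: $\mathsf{a}\mathsf{a}v_1=\mathsf{a}v_1$; $\mathsf{a}(\mathsf{op}(v_1,\dots,v_n))=\mathsf{op}(v_1,\dots,v_n)$ and $\mathsf{op}(\mathsf{a}v_1,\dots,\mathsf{a}v_n)=\mathsf{op}(v_1,\dots,v_n)$ for every $(\mathsf{op}:n)\in\Sigma$; and $t(\mathsf{a}v_1,\dots,\mathsf{a}v_n)=s(\mathsf{a}v_1,\dots,\mathsf{a}v_n)$ for every equation $t(v_1,\dots,v_n)=s(v_1,\dots,v_n)$ in $E$. *)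

From mathcomp Require Import all_boot.
Set Implicit Arguments. Unset Strict Implicit. Unset Printing Implicit Defensive.

Record signature := Signature { op_sym :> Type ; arity : op_sym -> nat }.

(* Terms over Var = {v_1, v_2, ...}; variable v_(k+1) is [tvar k]. *)
Inductive term (S : signature) : Type :=
| tvar : nat -> term S
| top : forall o : S, ('I_(arity o) -> term S) -> term S.
Arguments tvar {S} _.
Arguments top {S} o _.

Fixpoint subst (S : signature) (sigma : nat -> term S) (t : term S) : term S :=
  match t with
  | tvar k => sigma k
  | top o args => top o (fun i => subst sigma (args i))
  end.

Definition equations (S : signature) := term S -> term S -> Prop.

Inductive derivable (S : signature) (E : equations S) : term S -> term S -> Prop :=
| d_ax : forall s t, E s t -> derivable E s t
| d_refl : forall t, derivable E t t
| d_sym : forall s t, derivable E s t -> derivable E t s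
| d_trans : forall s t u, derivable E s t -> derivable E t u -> derivable E s u
| d_cong : forall (o : S) (a b : 'I_(arity o) -> term S),
    (forall i, derivable E (a i) (b i)) -> derivable E (top o a) (top o b)
| d_subst : forall (sigma : nat -> term S) s t,
    derivable E s t -> derivable E (subst sigma s) (subst sigma t).

(* The extended signature Sigma^s = Sigma + {a : 1}; [None] is the symbol a. *)
Definition sig_s (S : signature) : signature :=
  @Signature (option S) (fun o => match o with None => 1 | Some o' => arity o' end).

Definition aop (S : signature) (t : term (sig_s S)) : term (sig_s S) :=
  @top (sig_s S) None (fun _ => t).

Fixpoint embed (S : signature) (t : term S) : term (sig_s S) :=
  match t with
  | tvar k => tvar k
  | top o args => @top (sig_s S) (Some o) (fun i => embed (args i))
  end.

(* The substitution v_i |-> a v_i, i.e. t(v_1..v_n) |-> t(a v_1, .., a v_n). *)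
Definition a_vars (S : signature) : nat -> term (sig_s S) :=
  fun k => aop (tvar k).

Definition op_generic (S : signature) (o : S) : term (sig_s S) :=
  @top (sig_s S) (Some o) (fun i => tvar (nat_of_ord i)).

Inductive eqs_s (S : signature) (E : equations S) : equations (sig_s S) :=
| es_aa : eqs_s E (aop (aop (tvar 0))) (aop (tvar 0))
| es_a_op : forall o : S, eqs_s E (aop (op_generic o)) (op_generic o)
| es_op_a : forall o : S, eqs_s E (subst (@a_vars S) (op_generic o)) (op_generic o)
| es_E : forall t s, E t s ->
    eqs_s E (subst (@a_vars S) (embed t)) (subst (@a_vars S) (embed s)).

(** The translation [t ↦ t(a v_1, ..., a v_n)] commutes with every rule of
    equational logic except substitution on the nose.  For substitution one
    needs [t(a v)[a σ(v)] = (t[σ])(a v)], which holds up to [E^s] because [a] is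
    absorbed by every translated term: [a a v = a v] for variables and
    [a op(...) = op(...)] for operation terms. *)
From mathcomp Require Import all_boot.
Set Implicit Arguments. Unset Strict Implicit.

Lemma derivable_top_eq (S : signature) (E : equations S) (o : S)
    (a b : 'I_(arity o) -> term S) :
  a =1 b -> derivable E (top o a) (top o b).
Proof. by move=> eq_ab; apply: d_cong => i; rewrite eq_ab; apply: d_refl. Qed.

(* Turns an argument family into a substitution, so that [op_generic o] can be
   instantiated to any operation term with head [Some o]. *)
Definition ord_ext (T : Type) (x0 : T) (n : nat) (f : 'I_n -> T) (k : nat) : T :=
  if insub k is Some i then f i else x0.

Lemma ord_extE (T : Type) (x0 : T) (n : nat) (f : 'I_n -> T) (i : 'I_n) :
  ord_ext x0 f i = f i.
Proof. by rewrite /ord_ext valK. Qed.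

Section ATranslation.

Variables (S : signature) (E : equations S).

Local Notation derivable_s := (derivable (eqs_s E)).

Definition embed_a (t : term S) : term (sig_s S) := subst (@a_vars S) (embed t).

Lemma aop_embed_a (u : term S) : derivable_s (aop (embed_a u)) (embed_a u).
Proof.
case: u => [k|o args]; first exact: (d_subst (fun=> tvar k) (d_ax (es_aa E))).
pose sigma := ord_ext (tvar 0) (fun i => embed_a (args i)).
have inst : derivable_s (subst sigma (op_generic o)) (embed_a (top o args)).
  by apply: derivable_top_eq => i; apply: ord_extE.
apply: (d_trans _ inst); apply: d_trans (d_subst sigma (d_ax (es_a_op E o))).
by apply: d_cong => _; apply: d_sym inst.
Qed.

Lemma embed_a_subst (sigma : nat -> term S) (r : term S) :
  derivable_s (subst (embed_a \o sigma) (embed_a r)) (embed_a (subst sigma r)).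
Proof.
elim: r => [k|o args IH]; first exact: aop_embed_a.
by apply: d_cong => i; apply: IH.
Qed.

End ATranslation.

Theorem lemma7 (S : signature) (E : equations S) (t s : term S) :
  derivable E t s ->
  derivable (eqs_s E) (subst (@a_vars S) (embed t)) (subst (@a_vars S) (embed s)).
Proof.
elim=> {t s} [s t /es_E /d_ax //|t|s t _|s t u _ + _|o a b _ IH|sigma s t _ IH].
- exact: d_refl.
- exact: d_sym.
- exact: d_trans.
- by apply: d_cong => i; apply: IH.
- apply: d_trans (embed_a_subst E sigma t).
  apply: d_trans (d_sym (embed_a_subst E sigma s)) _.
  exact: d_subst IH.
Qed.
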